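(* Let $\mathbf{r}\in\mathbb{Q}^n$, let $\le_m$ be a monomial order and let $<_{\mathbf{r},m}$ be the associated term order. Let $T$ be a finite set of terms of $K[\mathbf{X}]$. Then there exists $\mathbf{s}\in\mathbb{Q}^n$ such that for all $t_1,t_2\in T$, $$t_1>_{\mathbf{r},m}t_2 \iff \mathrm{val}_{\mathbf{s}}(t_1)<\mathrm{val}_{\mathbf{s}}(t_2).$$ In particular, if $F$ is a finite set of polynomials in $K[\mathbf{X}]$, every equivalence class of term orders (of the form $<_{\mathbf{r},m}$) with respect to $F$ contains a term order $<_{\mathbf{s},m}$ such that $\mathrm{LT}_{\mathbf{s},m}(f)=\mathrm{init}_{\mathbf{s}}(f)$ for all $f\in F$.
   Context: $K$ is a field complete for a discrete valuation $\mathrm{val}$. A term is $c\mathbf{X}^\alpha$ with $c\in K^\times$, $\alpha\in\mathbb{N}^n$. For $\mathbf{s}\in\mathbb{Q}^n$, the Gauss valuation of a term is $\mathrm{val}_{\mathbf{s}}(c\mathbf{X}^\alpha)=\mathrm{val}(c)-\mathbf{s}\cdot\alpha$, and of a polynomial $f$ it is the minimum over its terms. Given a monomial order $\le_m$, $a\mathbf{X}^\alpha<_{\mathbf{r},m}b\mathbf{X}^\beta$ iff $\mathrm{val}_{\mathbf{r}}(a\mathbf{X}^\alpha)>\mathrm{val}_{\mathbf{r}}(b\mathbf{X}^\beta)$, or they are equal and $\mathbf{X}^\alpha<_m\mathbf{X}^\beta$; $\mathrm{LT}_{\mathbf{r},m}(f)$ is the maximal term of $f$. The initial part $\mathrm{init}_{\mathbf{s}}(f)$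 is the sum of the terms of $f$ whose Gauss valuation $\mathrm{val}_{\mathbf{s}}$ equals $\mathrm{val}_{\mathbf{s}}(f)$. Two term orders $<_1,<_2$ are equivalent with respect to a finite set $F$ if $\{\mathrm{LT}_{<_1}(f):f\in F\}=\{\mathrm{LT}_{<_2}(f):f\in F\}$. *)

From HB Require Import structures.
From mathcomp Require Import all_boot all_order all_algebra.
From mathcomp Require Import mpoly.
Set Implicit Arguments. Unset Strict Implicit. Unset Printing Implicit Defensive.
Import Order.TTheory GRing.Theory Num.Theory.
Local Open Scope ring_scope.

(* val is only meaningful on K^x; its value at 0 is irrelevant. *)
Definition is_discrete_valuation (K : fieldType) (val : K -> int) : Prop :=
  [/\ (forall x y : K, x != 0 -> y != 0 -> val (x * y) = val x + val y),
      (forall x y : K, x != 0 -> y != 0 -> x + y != 0 ->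
          Num.min (val x) (val y) <= val (x + y)) &
      (exists pi : K, pi != 0 /\ val pi = 1)].

Definition vsmall (K : fieldType) (val : K -> int) (N : int) (x : K) : bool :=
  (x == 0) || (N <= val x).

Definition vcauchy (K : fieldType) (val : K -> int) (u : nat -> K) : Prop :=
  forall N : int, exists M : nat, forall p q : nat, (M <= p)%N -> (M <= q)%N ->
    vsmall val N (u p - u q).

Definition vconverges (K : fieldType) (val : K -> int) (u : nat -> K) (l : K) : Prop :=
  forall N : int, exists M : nat, forall p : nat, (M <= p)%N -> vsmall val N (u p - l).

Definition vcomplete (K : fieldType) (val : K -> int) : Prop :=
  forall u : nat -> K, vcauchy val u -> exists l : K, vconverges val u l.

Definition monomial_order (n : nat) (le : rel 'X_{1..n}) : Prop :=
  [/\ (forall a, le a a),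
      (forall a b, le a b -> le b a -> a = b),
      (forall a b c, le a b -> le b c -> le a c) &
      (forall a b, le a b || le b a)] /\
  (forall a b c, le a b -> le (a + c)%MM (b + c)%MM) /\
  well_founded (fun a b => le a b && (a != b)).

Definition term (K : fieldType) (n : nat) := (K * 'X_{1..n})%type.

Definition is_term (K : fieldType) (n : nat) (t : term K n) : bool := t.1 != 0.

Definition sdot (n : nat) (s : 'rV[rat]_n) (a : 'X_{1..n}) : rat :=
  \sum_(i < n) s 0 i * (a i)%:R.

Definition gval (K : fieldType) (val : K -> int) (n : nat) (s : 'rV[rat]_n)
  (t : term K n) : rat := (val t.1)%:~R - sdot s t.2.

Definition term_lt (K : fieldType) (val : K -> int) (n : nat) (r : 'rV[rat]_n)
  (le : rel 'X_{1..n}) (t1 t2 : term K n) : bool :=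
  (gval val r t1 > gval val r t2) ||
  ((gval val r t1 == gval val r t2) && (le t1.2 t2.2 && (t1.2 != t2.2))).

Definition LT_exp (K : fieldType) (val : K -> int) (n : nat) (r : 'rV[rat]_n)
  (le : rel 'X_{1..n}) (f : {mpoly K[n]}) : option 'X_{1..n} :=
  foldr (fun m acc => match acc with
                      | None => Some m
                      | Some m' => if term_lt val r le (f@_m', m') (f@_m, m)
                                   then Some m else Some m'
                      end) None (msupp f).

(* LT_{r,m}(f), as a polynomial (the term f@_alpha X^alpha); 0 for f = 0 *)
Definition LT (K : fieldType) (val : K -> int) (n : nat) (r : 'rV[rat]_n)
  (le : rel 'X_{1..n}) (f : {mpoly K[n]}) : {mpoly K[n]} :=
  match LT_exp val r le f with
  | None => 0
  | Some m => f@_m *: 'X_[m]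
  end.

Definition init (K : fieldType) (val : K -> int) (n : nat) (s : 'rV[rat]_n)
  (f : {mpoly K[n]}) : {mpoly K[n]} :=
  \sum_(m <- msupp f |
          all (fun m' => gval val s (f@_m, m) <= gval val s (f@_m', m')) (msupp f))
     f@_m *: 'X_[m].

Definition equiv_wrt (K : fieldType) (n : nat)
  (LT1 LT2 : {mpoly K[n]} -> {mpoly K[n]}) (F : seq {mpoly K[n]}) : Prop :=
  [seq LT1 f | f <- F] =i [seq LT2 f | f <- F].

From HB Require Import structures.
From mathcomp Require Import all_boot all_order all_algebra.
From mathcomp Require Import mpoly.
From mathcomp Require Import ring.
Set Implicit Arguments. Unset Strict Implicit. Unset Printing Implicit Defensive.
Import Order.TTheory GRing.Theory Num.Theory.
Local Open Scope ring_scope.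

(* Encode each strict comparison t2 <_{r,m} t1 of terms of T, with exponents
   a2 and a1, by the vector (val_r t2 - val_r t1, a1 - a2) of Q^(1+n), and add
   (1, 0).  No positive combination of these vectors vanishes: its first
   coordinate is nonnegative, and when it is zero the other coordinates have
   the form (b - a) / N with a <_m b (sums keep this form because <_m is
   compatible with addition).  By Gordan's theorem, proved by Fourier-Motzkin
   elimination, some (lam, w) pairs positively with all of them; then lam > 0
   and s = r + w / lam works.  Applied to all the terms of all f in F, the
   orders <_{s,m} and <_{r,m} agree on them and val_s separates the terms of
   each f, so LT_{s,m}(f) is the unique term of minimal val_s. *)

Section Gordan.
Variable R : realFieldType.

Lemma exists_between (Ls Us : seq R) :
  {in Ls & Us, forall l u, l < u} ->
  exists t, {in Ls, forall l, l < t} /\ {in Us, forall u, t < u}.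
Proof.
move=> LsUs.
pose c := \big[Num.max/0]_(l <- Ls) l + 1.
pose b := \big[Num.min/c]_(u <- Us) u.
pose a := \big[Num.max/b - 1]_(l <- Ls) l.
have lt_b : {in Ls, forall l, l < b}.
  move=> l hl; rewrite /b big_seq; apply: lt_bigmin => [|u hu]; last exact: LsUs.
  by apply: le_lt_trans (le_bigmax_seq 0 _ _ _ hl isT) _; rewrite ltrDl.
have lt_ab : a < b.
  by rewrite /a big_seq; apply: bigmax_lt => [|l /lt_b //]; rewrite gtrBl.
exists ((a + b) / 2); split => [l hl|u hu].
  exact: le_lt_trans (le_bigmax_seq (b - 1) _ _ _ hl isT) (midf_lt lt_ab).1.
exact: lt_le_trans (midf_lt lt_ab).2 (ge_bigmin_seq c _ _ _ hu isT).
Qed.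

Definition dotr m (u v : 'rV[R]_m) : R := (u *m v^T) 0 0.

Lemma dotrC m (u v : 'rV[R]_m) : dotr u v = dotr v u.
Proof. by rewrite /dotr !mxE; apply: eq_bigr => i _; rewrite !mxE mulrC. Qed.

Lemma dotrDr m (u v w : 'rV[R]_m) : dotr u (v + w) = dotr u v + dotr u w.
Proof. by rewrite /dotr linearD mulmxDr mxE. Qed.

Lemma dotrZr m a (u v : 'rV[R]_m) : dotr u (a *: v) = a * dotr u v.
Proof. by rewrite /dotr linearZ -scalemxAr mxE. Qed.

Lemma dotrDl m (u v w : 'rV[R]_m) : dotr (u + v) w = dotr u w + dotr v w.
Proof. by rewrite ![dotr _ w]dotrC dotrDr. Qed.

Lemma dotrZl m a (u v : 'rV[R]_m) : dotr (a *: u) v = a * dotr u v.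
Proof. by rewrite ![dotr _ v]dotrC dotrZr. Qed.

Lemma dotrNr m (u v : 'rV[R]_m) : dotr u (- v) = - dotr u v.
Proof. by rewrite -scaleN1r dotrZr mulN1r. Qed.

Lemma dotr0 m (u : 'rV[R]_m) : dotr u 0 = 0.
Proof. by rewrite -(scale0r 0) dotrZr mul0r. Qed.

Lemma dotr_row_mx m1 m2 (u1 v1 : 'rV[R]_m1) (u2 v2 : 'rV[R]_m2) :
  dotr (row_mx u1 u2) (row_mx v1 v2) = dotr u1 v1 + dotr u2 v2.
Proof. by rewrite /dotr tr_row_mx mul_row_col mxE. Qed.

Lemma dotr_scalar (a b : R) : dotr a%:M b%:M = a * b.
Proof. by rewrite /dotr tr_scalar_mx -scalar_mxM mxE mulr1n. Qed.

Definition vhead m (x : 'rV[R]_(1 + m)) : R := lsubmx x 0 0.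

Lemma row_mx_vhead m (x : 'rV[R]_(1 + m)) : row_mx (vhead x)%:M (rsubmx x) = x.
Proof. by rewrite /vhead -mx11_scalar hsubmxK. Qed.

Lemma vhead_row_mx m a (x : 'rV[R]_m) : vhead (row_mx a%:M x) = a.
Proof. by rewrite /vhead row_mxKl mxE mulr1n. Qed.

Lemma vheadD m (x y : 'rV[R]_(1 + m)) : vhead (x + y) = vhead x + vhead y.
Proof. by rewrite /vhead linearD mxE. Qed.

Lemma vheadZ m a (x : 'rV[R]_(1 + m)) : vhead (a *: x) = a * vhead x.
Proof. by rewrite /vhead linearZ mxE. Qed.

Lemma dotr_vhead m t (w : 'rV[R]_m) (x : 'rV[R]_(1 + m)) :
  dotr (row_mx t%:M w) x = t * vhead x + dotr w (rsubmx x).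
Proof. by rewrite -[x in LHS]row_mx_vhead dotr_row_mx dotr_scalar. Qed.

Inductive pos_comb m (D : seq 'rV[R]_m) : 'rV[R]_m -> Prop :=
| pos_comb_scale c d of d \in D & 0 < c : pos_comb D (c *: d)
| pos_comb_add x y of pos_comb D x & pos_comb D y : pos_comb D (x + y).

Lemma pos_combZ m (D : seq 'rV[R]_m) c x : 0 < c -> pos_comb D x -> pos_comb D (c *: x).
Proof.
move=> c_gt0; elim=> [c' d dD c'_gt0|x1 x2 _ h1 _ h2].
  by rewrite scalerA; apply: pos_comb_scale => //; apply: mulr_gt0.
by rewrite scalerDr; apply: pos_comb_add.
Qed.

Lemma pos_comb_map m1 m2 (f : {linear 'rV[R]_m1 -> 'rV[R]_m2}) D x :
  pos_comb (map f D) x -> exists2 y, pos_comb D y & x = f y.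
Proof.
elim=> [c _ /mapP[d dD ->] c_gt0|x1 x2 _ [y1 h1 ->] _ [y2 h2 ->]].
  by exists (c *: d); [apply: pos_comb_scale|rewrite linearZ].
by exists (y1 + y2); [apply: pos_comb_add|rewrite linearD].
Qed.

Definition fm_elim m (D : seq 'rV[R]_(1 + m)) : seq 'rV[R]_(1 + m) :=
  [seq d <- D | vhead d == 0] ++
  [seq vhead p *: q - vhead q *: p | p <- [seq d <- D | 0 < vhead d],
                                      q <- [seq d <- D | vhead d < 0]].

Section FourierMotzkin.
Variables (m : nat) (D : seq 'rV[R]_(1 + m)).

Lemma fm_elimP d :
  d \in fm_elim D -> vhead d = 0 /\ pos_comb D d.
Proof.
rewrite mem_cat => /orP[|/allpairsP[[p q] [/= pD qD ->]]].
  rewrite mem_filter => /andP[/eqP d0 dD]; split => //.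
  by rewrite -[d]scale1r; apply: pos_comb_scale.
move: pD qD; rewrite !mem_filter => /andP[p_gt0 pD] /andP[q_lt0 qD].
split; first by rewrite vheadD -scaleNr !vheadZ mulNr mulrC addrN.
rewrite -scaleNr; apply: pos_comb_add; apply: pos_comb_scale => //.
by rewrite oppr_gt0.
Qed.

Lemma fm_elim_neq0 :
  (forall x, pos_comb D x -> x != 0) ->
  forall x, pos_comb [seq rsubmx d | d <- fm_elim D] x -> x != 0.
Proof.
move=> HD _ /pos_comb_map[y y_elim ->].
have [y_vhead yD] : vhead y = 0 /\ pos_comb D y.
  elim: y_elim => [c d /fm_elimP[hd dD] c_gt0|x1 x2 _ [h1 d1] _ [h2 d2]].
    by rewrite vheadZ hd mulr0; split => //; apply: pos_combZ.
  by rewrite vheadD h1 h2 addr0; split => //; apply: pos_comb_add.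
apply: contra (HD _ yD) => /eqP y_tail0.
by rewrite -(row_mx_vhead y) y_vhead y_tail0 raddf0 row_mx0.
Qed.

Lemma fm_lift (w : 'rV[R]_m) :
  {in fm_elim D, forall d, 0 < dotr w (rsubmx d)} ->
  exists t, {in D, forall d, 0 < dotr (row_mx t%:M w) d}.
Proof.
move=> w_elim.
pose lo := [seq - dotr w (rsubmx p) / vhead p | p <- [seq d <- D | 0 < vhead d]].
pose hi := [seq dotr w (rsubmx q) / - vhead q | q <- [seq d <- D | vhead d < 0]].
have [t [lo_t t_hi]] : exists t, {in lo, forall l, l < t} /\ {in hi, forall u, t < u}.
  apply: exists_between => _ _ /mapP[p pD ->] /mapP[q qD ->].
  have /w_elim elim_gt0 : vhead p *: q - vhead q *: p \in fm_elim D.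
    by rewrite mem_cat (allpairs_f (fun p q => vhead p *: q - vhead q *: p) pD qD) orbT.
  move: pD qD; rewrite !mem_filter => /andP[p_gt0 _] /andP[q_lt0 _].
  rewrite -subr_gt0.
  have -> : dotr w (rsubmx q) / - vhead q - - dotr w (rsubmx p) / vhead p =
            dotr w (rsubmx (vhead p *: q - vhead q *: p)) / (vhead p * - vhead q).
    rewrite raddfB /= !linearZ /= dotrDr !dotrZr dotrNr.
    by field; rewrite ltr0_neq0 // lt0r_neq0.
  by apply: divr_gt0 => //; rewrite mulr_gt0 // oppr_gt0.
exists t => d dD; rewrite dotr_vhead.
case: (ltgtP (vhead d) 0) => hd.
- have : t < dotr w (rsubmx d) / - vhead d.
    by apply: t_hi; apply: map_f; rewrite mem_filter hd.
  rewrite -subr_gt0 => gap.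
  have -> : t * vhead d + dotr w (rsubmx d) =
            - vhead d * (dotr w (rsubmx d) / - vhead d - t).
    by field; rewrite ltr0_neq0.
  by rewrite mulr_gt0 // oppr_gt0.
- have : - dotr w (rsubmx d) / vhead d < t.
    by apply: lo_t; apply: map_f; rewrite mem_filter hd.
  rewrite -subr_gt0 => gap.
  have -> : t * vhead d + dotr w (rsubmx d) =
            vhead d * (t - - dotr w (rsubmx d) / vhead d).
    by field; rewrite lt0r_neq0.
  exact: mulr_gt0.
- rewrite hd mulr0 add0r; apply: w_elim.
  by rewrite mem_cat mem_filter hd eqxx dD.
Qed.

End FourierMotzkin.

Theorem Gordan m (D : seq 'rV[R]_m) :
  (forall x, pos_comb D x -> x != 0) -> exists w, {in D, forall d, 0 < dotr w d}.
Proof.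
elim: m D => [|m IH] D HD.
  exists 0 => d dD; have /negP[] := HD _ (pos_comb_scale dD ltr01).
  by rewrite [_ *: d]thinmx0 eqxx.
have [w wD] := IH _ (fm_elim_neq0 HD).
have [t tD] := fm_lift (fun d hd => wD _ (map_f rsubmx hd)).
by exists (row_mx t%:M w).
Qed.

End Gordan.

Lemma rat_gt0_mul_nat (c : rat) :
  0 < c -> exists N k : nat, [/\ (0 < N)%N, (0 < k)%N & N%:R * c = k%:R].
Proof.
move=> c_gt0; exists `|denq c|%N, `|numq c|%N.
have numq_gt0 : 0 < numq c by rewrite numq_gt0.
split; first by rewrite absz_gt0 denq_neq0.
  by rewrite absz_gt0 gt_eqF.
by rewrite !natr_absz !gtr0_norm ?denq_gt0 // numqE mulrC.
Qed.

Definition mlt (n : nat) (le : rel 'X_{1..n}) : rel 'X_{1..n} :=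
  fun a b => le a b && (a != b).

Definition mexp (n : nat) (a : 'X_{1..n}) : 'rV[rat]_n := \row_i (a i)%:R.

Lemma mexpD n (a b : 'X_{1..n}) : mexp (a + b)%MM = mexp a + mexp b.
Proof. by apply/rowP => i; rewrite !mxE mnmDE natrD. Qed.

Lemma mexpMn n (a : 'X_{1..n}) k : mexp (a *+ k)%MM = k%:R *: mexp a.
Proof. by apply/rowP => i; rewrite !mxE mulmnE natrM mulrC. Qed.

Lemma mexp_inj n : injective (@mexp n).
Proof.
move=> a b /rowP ab; apply/mnmP => i.
by have /eqP := ab i; rewrite !mxE eqr_nat => /eqP.
Qed.

Lemma sdotE n (s : 'rV[rat]_n) a : sdot s a = dotr s (mexp a).
Proof. by rewrite /sdot /dotr mxE; apply: eq_bigr => i _; rewrite !mxE. Qed.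

Section MonomialOrder.
Variables (n : nat) (le : rel 'X_{1..n}).
Hypothesis hle : monomial_order le.

Lemma mlt_add a1 b1 a2 b2 :
  mlt le a1 b1 -> mlt le a2 b2 -> mlt le (a1 + a2)%MM (b1 + b2)%MM.
Proof.
case: hle => -[_ le_anti le_trans _] [le_add _] /andP[le1 ne1] /andP[le2 ne2].
have le12 : le (a1 + a2)%MM (b1 + a2)%MM by apply: le_add.
have le21 : le (b1 + a2)%MM (b1 + b2)%MM by rewrite ![(b1 + _)%MM]addmC; apply: le_add.
apply/andP; split; first exact: le_trans le12 le21.
apply: contra ne1 => /eqP e; rewrite -e in le21.
by rewrite -(addIm (le_anti _ _ le12 le21)).
Qed.

Lemma mlt_mulmn a b k : mlt le a b -> (0 < k)%N -> mlt le (a *+ k)%MM (b *+ k)%MM.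
Proof.
move=> ab; case: k => // k _; elim: k => [|k IH]; first by rewrite !mulm1n.
by rewrite (mulmS a) (mulmS b); apply: mlt_add.
Qed.

Definition ordered_diff (v : 'rV[rat]_n) : Prop :=
  exists N a b, [/\ (0 < N)%N, mlt le a b & N%:R *: v = mexp b - mexp a].

Lemma ordered_diffZ c a b : 0 < c -> mlt le a b -> ordered_diff (c *: (mexp b - mexp a)).
Proof.
move=> /rat_gt0_mul_nat[N [k [N_gt0 k_gt0 Nc]]] ab.
exists N, (a *+ k)%MM, (b *+ k)%MM; split => //; first exact: mlt_mulmn.
by rewrite scalerA Nc !mexpMn scalerBr.
Qed.

Lemma ordered_diffD u v : ordered_diff u -> ordered_diff v -> ordered_diff (u + v).
Proof.
move=> [N1 [a1 [b1 [N1_gt0 ab1 Nu]]]] [N2 [a2 [b2 [N2_gt0 ab2 Nv]]]].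
exists (N1 * N2)%N, (a1 *+ N2 + a2 *+ N1)%MM, (b1 *+ N2 + b2 *+ N1)%MM; split.
- by rewrite muln_gt0 N1_gt0.
- by apply: mlt_add; apply: mlt_mulmn.
have -> : (N1 * N2)%:R *: (u + v) = N2%:R *: (N1%:R *: u) + N1%:R *: (N2%:R *: v).
  by rewrite scalerDr !scalerA natrM [N2%:R * _]mulrC.
by rewrite Nu Nv !mexpD !mexpMn !scalerBr opprD addrACA.
Qed.

Lemma ordered_diff_neq0 v : ordered_diff v -> v != 0.
Proof.
move=> [N [a [b [_ /andP[_ ab] Nv]]]]; apply: contra ab => /eqP v0.
by move: Nv; rewrite v0 scaler0 => /eqP; rewrite eq_sym subr_eq0 => /eqP/mexp_inj ->.
Qed.

End MonomialOrder.

Lemma not_term_lt_both (K : fieldType) (val : K -> int) n (s : 'rV[rat]_n)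
    (le : rel 'X_{1..n}) (t1 t2 : term K n) :
  total le -> ~~ term_lt val s le t1 t2 -> ~~ term_lt val s le t2 t1 ->
  gval val s t1 = gval val s t2 /\ t1.2 = t2.2.
Proof.
move=> le_total; rewrite /term_lt; case: ltgtP => //= -> lt12 lt21; split => //.
case: eqVneq lt12 lt21 => //= _; rewrite !andbT.
by case/orP: (le_total t1.2 t2.2) => ->.
Qed.

Section TermOrder.
Variables (K : fieldType) (val : K -> int) (n : nat) (r : 'rV[rat]_n).
Variables (le : rel 'X_{1..n}) (hle : monomial_order le).

Definition gval_represents (s : 'rV[rat]_n) (T : seq (term K n)) : Prop :=
  {in T &, forall t1 t2, term_lt val r le t2 t1 <-> gval val s t1 < gval val s t2}.

Definition term_vec (t1 t2 : term K n) : 'rV[rat]_(1 + n) :=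
  row_mx (gval val r t2 - gval val r t1)%:M (mexp t1.2 - mexp t2.2).

Definition term_vecs (T : seq (term K n)) : seq 'rV[rat]_(1 + n) :=
  row_mx 1%:M 0 ::
  [seq term_vec t1 t2 | t1 <- T, t2 <- [seq t <- T | term_lt val r le t t1]].

Lemma pos_comb_term_vecs T x :
  pos_comb (term_vecs T) x -> 0 < vhead x \/ vhead x = 0 /\ ordered_diff le (rsubmx x).
Proof.
elim=> [c d + c_gt0|x1 x2 _ hx _ hy].
  rewrite inE => /orP[/eqP->|/allpairsPdep[t1 [t2 [_ + ->]]]].
    by left; rewrite vheadZ vhead_row_mx mulr1.
  rewrite mem_filter /term_lt => /andP[/orP[gt12|/andP[/eqP eq12 lt21]] _].
    by left; rewrite vheadZ vhead_row_mx mulr_gt0 // subr_gt0.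
  right; rewrite vheadZ vhead_row_mx eq12 subrr mulr0; split => //.
  by rewrite linearZ /= row_mxKr; apply: ordered_diffZ.
rewrite vheadD raddfD /=.
case: hx hy => [x_gt0|[x0 dx]] [y_gt0|[y0 dy]].
- by left; rewrite addr_gt0.
- by left; rewrite y0 addr0.
- by left; rewrite x0 add0r.
- by right; rewrite x0 y0 addr0; split => //; apply: ordered_diffD.
Qed.

Lemma pos_comb_term_vecs_neq0 T x : pos_comb (term_vecs T) x -> x != 0.
Proof.
move=> /pos_comb_term_vecs[x_gt0|[_ /ordered_diff_neq0]].
  by apply: contraTneq x_gt0 => ->; rewrite /vhead linear0 mxE ltxx.
by apply: contraNneq => ->; rewrite linear0.
Qed.

Lemma exists_gval_represents T : exists s, gval_represents s T.
Proof.
have [w wT] := Gordan (@pos_comb_term_vecs_neq0 T).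
set lam := vhead w; set w' := rsubmx w.
have dotr_w x : dotr w x = lam * vhead x + dotr w' (rsubmx x).
  by rewrite -[w]row_mx_vhead dotr_vhead.
have lam_gt0 : 0 < lam.
  by have := wT _ (mem_head _ _); rewrite dotr_w vhead_row_mx row_mxKr dotr0 addr0 mulr1.
pose s := r + lam^-1 *: w'.
have gval_s t : gval val s t = gval val r t - lam^-1 * dotr w' (mexp t.2).
  by rewrite /gval !sdotE dotrDl dotrZl opprD addrA.
have gval_s_gap t1 t2 : gval val s t2 - gval val s t1 = lam^-1 * dotr w (term_vec t1 t2).
  rewrite !gval_s dotr_w vhead_row_mx row_mxKr dotrDr dotrNr.
  by field; rewrite lt0r_neq0.
have lt_gval_s : {in T &, forall t1 t2,
    term_lt val r le t2 t1 -> gval val s t1 < gval val s t2}.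
  move=> t1 t2 t1T t2T lt21; rewrite -subr_gt0 gval_s_gap mulr_gt0 ?invr_gt0 //.
  apply: wT; rewrite inE; apply/orP; right.
  by apply: (allpairs_f_dep term_vec t1T); rewrite mem_filter lt21.
exists s => t1 t2 t1T t2T; split; first exact: lt_gval_s.
move=> lt_s; apply/negPn/negP => not_lt21.
have not_lt12 : ~~ term_lt val r le t1 t2.
  by apply/negP => /(lt_gval_s _ _ t2T t1T); rewrite ltNge ltW.
have le_total : total le by case: hle => -[].
have [eq_gval eq_exp] := not_term_lt_both le_total not_lt12 not_lt21.
by move: lt_s; rewrite !gval_s eq_gval eq_exp ltxx.
Qed.

End TermOrder.

(* [LT_exp val s le f] unfolds to [fold_max] of the term order on [msupp f]. *)
Definition fold_max (A : Type) (lt : rel A) (l : seq A) : option A :=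
  foldr (fun m acc => match acc with
                      | None => Some m
                      | Some m' => if lt m' m then Some m else Some m'
                      end) None l.

Lemma fold_max_cons (A : Type) (lt : rel A) a l :
  fold_max lt (a :: l) =
  if fold_max lt l is Some m then Some (if lt m a then a else m) else Some a.
Proof. by rewrite /= -/(fold_max lt l); case: (fold_max lt l) => // m; case: ifP. Qed.

Lemma fold_max_mem (A : eqType) (lt : rel A) l m : fold_max lt l = Some m -> m \in l.
Proof.
elim: l m => // a l IH m; rewrite fold_max_cons.
case E: (fold_max lt l) => [m'|] [<-]; last exact: mem_head.
by case: ifP; rewrite inE ?eqxx ?(IH _ E) ?orbT.
Qed.

Lemma eq_in_fold_max (A : eqType) (lt1 lt2 : rel A) l :
  {in l &, lt1 =2 lt2} -> fold_max lt1 l = fold_max lt2 l.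
Proof.
elim: l => // a l IH lt12; rewrite !fold_max_cons IH => [|x y xl yl]; last first.
  by apply: lt12; rewrite inE ?xl ?yl orbT.
case E: (fold_max lt2 l) => [m|] //; rewrite lt12 ?mem_head // inE.
by rewrite (fold_max_mem E) orbT.
Qed.

Lemma fold_max_argmin (A : eqType) (R : realDomainType) (g : A -> R) l :
  l != [::] ->
  exists2 m0, fold_max (fun a b => g b < g a) l = Some m0 &
              m0 \in l /\ {in l, forall m, g m0 <= g m}.
Proof.
elim: l => // a [|b l] IH _.
  by exists a; split => [|m]; rewrite ?mem_seq1 // => /eqP->.
have [m0 fm0 [m0l m0_min]] := IH isT.
rewrite fold_max_cons fm0; case: ltP => [ga_lt|ga_ge].
  exists a; split => [|m]; first exact: mem_head.
  by rewrite inE => /orP[/eqP->//|/m0_min]; apply/le_trans/ltW.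
exists m0; split => [|m]; first by rewrite inE m0l orbT.
by rewrite inE => /orP[/eqP->//|/m0_min].
Qed.

Definition mterms (K : fieldType) n (f : {mpoly K[n]}) : seq (term K n) :=
  [seq (f@_m, m) | m <- msupp f].

Section LeadingTerm.
Variables (K : fieldType) (val : K -> int) (n : nat) (r s : 'rV[rat]_n).
Variables (le : rel 'X_{1..n}) (le_total : total le) (T : seq (term K n)).
Hypothesis sT : gval_represents val r le s T.

Lemma gval_represents_eq : {in T &, forall t1 t2,
  gval val s t1 = gval val s t2 -> gval val r t1 = gval val r t2 /\ t1.2 = t2.2}.
Proof.
move=> t1 t2 t1T t2T eq12; apply: not_term_lt_both => //; apply/negP.
  by move/(sT t2T t1T); rewrite eq12 ltxx.
by move/(sT t1T t2T); rewrite eq12 ltxx.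
Qed.

Lemma term_lt_represented :
  {in T &, forall t1 t2, term_lt val s le t2 t1 = (gval val s t1 < gval val s t2)}.
Proof.
move=> t1 t2 t1T t2T; rewrite /term_lt; case: eqVneq => [eq21|_]; last by rewrite orbF.
by have [_ ->] := gval_represents_eq t2T t1T eq21; rewrite eqxx andbF orbF.
Qed.

Variables (f : {mpoly K[n]}) (fT : {subset mterms f <= T}).

Let g m := gval val s (f@_m, m).

Lemma LT_exp_represented :
  LT_exp val r le f = fold_max (fun a b => g b < g a) (msupp f) /\
  LT_exp val s le f = fold_max (fun a b => g b < g a) (msupp f).
Proof.
have fT' m : m \in msupp f -> (f@_m, m) \in T by move=> mf; apply/fT/map_f.
split; apply: eq_in_fold_max => a b /fT' aT /fT' bT.
  by apply/idP/idP => /(sT bT aT).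
exact: term_lt_represented.
Qed.

Lemma LT_represented : LT val s le f = LT val r le f.
Proof. by rewrite /LT; have [-> ->] := LT_exp_represented. Qed.

Lemma LT_init : LT val s le f = init val s f.
Proof.
rewrite /LT /init; have [_ ->] := LT_exp_represented.
have [->|f_ne0] := eqVneq (msupp f) [::]; first by rewrite big_nil.
have [m0 -> [m0f m0_min]] := fold_max_argmin g f_ne0.
have g_inj : {in msupp f &, injective g}.
  move=> a b af bf /(gval_represents_eq (fT (map_f _ af)) (fT (map_f _ bf))).
  by case.
rewrite -big_filter (_ : filter _ _ = [:: m0]) ?big_seq1 //.
rewrite -(filter_pred1_uniq (msupp_uniq f) m0f); apply: eq_in_filter => m mf /=.
apply/allP/eqP => [m_min|-> m' /m0_min //].
by apply: g_inj => //; apply/eqP; rewrite eq_le m_min // m0_min.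
Qed.

End LeadingTerm.

Theorem mainTheorem2 (K : fieldType) (val : K -> int)
  (hval : is_discrete_valuation val) (hcomplete : vcomplete val)
  (n : nat) (r : 'rV[rat]_n) (le : rel 'X_{1..n}) (hle : monomial_order le) :
  (forall T : seq (term K n), all (@is_term K n) T ->
     exists s : 'rV[rat]_n, forall t1 t2, t1 \in T -> t2 \in T ->
       (term_lt val r le t2 t1 <-> gval val s t1 < gval val s t2))
  /\
  (forall F : seq {mpoly K[n]},
     exists s : 'rV[rat]_n,
       equiv_wrt (LT val r le) (LT val s le) F /\
       (forall f, f \in F -> LT val s le f = init val s f)).
Proof.
have le_total : total le by case: hle => -[].
split => [T _|F]; first exact: exists_gval_represents.
pose T := flatten [seq mterms f | f <- F].
have [s sT] := exists_gval_represents val r hle T.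
have fT f : f \in F -> {subset mterms f <= T}.
  by move=> fF t tf; apply/flatten_mapP; exists f.
exists s; split => [|f fF]; last exact: (LT_init le_total sT (fT f fF)).
have /eq_in_map eq_LT : {in F, LT val s le =1 LT val r le}.
  by move=> f fF; apply: (LT_represented le_total sT (fT f fF)).
by rewrite /equiv_wrt eq_LT.
Qed.
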